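(* For every hereditary graph class $\mathscr{C}$ of bounded shrubdepth there exists a first-order sentence $\varphi_{\mathscr{C}}$ (over the signature of graphs with one binary adjacency relation) such that for every graph $G$, $G\in\mathscr{C}$ if and only if $G\models\varphi_{\mathscr{C}}$.
   Context: All graphs are finite, simple, undirected. A class is hereditary if closed under taking induced subgraphs. A tree-model of a graph $G$ consists of a finite label set $\Lambda$, a labelling $\lambda:V(G)\to\Lambda$, a rooted tree $T$ with leaf set $V(G)$, and for each non-leaf node $t$ a symmetric $M_t:\Lambda\times\Lambda\to\{0,1\}$, such that distinct $u,v$ are adjacent iff $M_t(\lambda(u),\lambda(v))=1$ for $t$ the lowest common ancestor of $u,v$ in $T$. A class $\mathscr{C}$ has bounded shrubdepth if there are $d,m\in\mathbb{N}$ such that every graph of $\mathscr{C}$ has a tree-model of depth at most $d$ using at most $m$ labels. *)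

From mathcomp Require Import all_boot.
Set Implicit Arguments. Unset Strict Implicit. Unset Printing Implicit Defensive.

Record graph := Graph {
  vert : finType;
  adj : rel vert;
  adj_sym : symmetric adj;
  adj_irr : irreflexive adj }.

Definition graph_class := graph -> Prop.

(* Hereditary: closed under taking induced subgraphs (i.e. under induced
   embeddings, which in particular includes isomorphic copies). *)
Definition hereditary (C : graph_class) : Prop :=
  forall (G H : graph) (f : vert H -> vert G),
    injective f ->
    (forall x y, @adj H x y = @adj G (f x) (f y)) ->
    C G -> C H.

Inductive tree (V : Type) (m : nat) : Type :=
| Leaf of V
| Node of ('I_m -> 'I_m -> bool) & seq (tree V m).
Arguments Leaf {V m}.
Arguments Node {V m}.

Section Trees.
Variables (V : eqType) (m : nat).

Fixpoint depth (t : tree V m) : nat :=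
  match t with
  | Leaf _ => 0
  | Node _ cs => (foldr maxn 0 (map depth cs)).+1
  end.

Fixpoint leaves (t : tree V m) : seq V :=
  match t with
  | Leaf v => [:: v]
  | Node _ cs => flatten (map leaves cs)
  end.

Fixpoint matrices_sym (t : tree V m) : bool :=
  match t with
  | Leaf _ => true
  | Node M cs => [forall a, forall b, M a b == M b a] && all matrices_sym cs
  end.

(* tadj lam t u v : the adjacency determined by the tree-model, i.e.
   M_t(lam u, lam v) for t the lowest common ancestor of u and v:
   if some child contains both u and v, recurse into it; otherwise, if both
   are leaves below the current node, this node is their lca. *)
Fixpoint tadj (lam : V -> 'I_m) (t : tree V m) (u v : V) : bool :=
  match t with
  | Leaf _ => false
  | Node M cs =>
      has (fun c => [&& u \in leaves c, v \in leaves c & tadj lam c u v]) cs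
      || [&& u \in flatten (map leaves cs), v \in flatten (map leaves cs),
             ~~ has (fun c => (u \in leaves c) && (v \in leaves c)) cs
           & M (lam u) (lam v)]
  end.
End Trees.

Definition has_tree_model (G : graph) (d m : nat) : Prop :=
  exists (lam : vert G -> 'I_m) (t : tree (vert G) m),
    [/\ depth t <= d,
        perm_eq (leaves t) (enum (vert G)),
        matrices_sym t &
        forall u v : vert G, u != v -> @adj G u v = tadj lam t u v].

Definition bounded_shrubdepth (C : graph_class) : Prop :=
  exists d m : nat, forall G, C G -> has_tree_model G d m.

(* First-order logic over the signature {E} of graphs, de Bruijn variables. *)
Inductive formula : Type :=
| FAdj of nat & nat
| FEq of nat & nat
| FNot of formula
| FAnd of formula & formula
| FOr of formula & formula
| FEx of formula
| FAll of formula.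

Fixpoint closed_at (n : nat) (phi : formula) : bool :=
  match phi with
  | FAdj i j | FEq i j => (i < n) && (j < n)
  | FNot p => closed_at n p
  | FAnd p q | FOr p q => closed_at n p && closed_at n q
  | FEx p | FAll p => closed_at n.+1 p
  end.

Definition sentence (phi : formula) : bool := closed_at 0 phi.

Fixpoint sat (G : graph) (env : seq (vert G)) (phi : formula) : Prop :=
  match phi with
  | FAdj i j =>
      match onth env i, onth env j with
      | Some x, Some y => @adj G x y
      | _, _ => False
      end
  | FEq i j =>
      match onth env i, onth env j with
      | Some x, Some y => x = y
      | _, _ => False
      end
  | FNot p => ~ sat env p
  | FAnd p q => sat env p /\ sat env q
  | FOr p q => sat env p \/ sat env q
  | FEx p => exists x : vert G, sat (x :: env) p
  | FAll p => forall x : vert G, sat (x :: env) p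
  end.

Definition models (G : graph) (phi : formula) : Prop := sat (G:=G) [::] phi.

(* A hereditary class C is determined by its minimal non-members: the graphs
   outside C all of whose one-vertex deletions lie in C.  If the members of C have
   tree-models of depth d with m labels, then so does H - v for a minimal
   non-member H, and placing that model next to a leaf v under a new root gives a
   tree-model of H of depth d+1, once each label also records adjacency to v.
   Tree-models of bounded depth and label count are almost full (well-quasi-
   ordered) under induced embedding: by Higman's lemma and induction on the depth
   their label trees are, and an embedding of label trees restricts to an induced
   embedding of the graphs.  Hence minimal non-members have bounded size K, since
   otherwise one of them would embed into a strictly larger one, thus into one of
   its one-vertex deletions, which lies in C.  Finally G is in C iff every
   (K+1)-tuple of vertices induces a member of C; this only depends on the atomic
   type of the tuple, so a universally quantified disjunction of atomic diagrams
   expresses it. *)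

From mathcomp Require Import all_boot boolp.
From Stdlib Require List.
Set Implicit Arguments. Unset Strict Implicit. Unset Printing Implicit Defensive.

(** * Almost full relations and Higman's lemma *)

Lemma dependent_choice X (Q : X -> Prop) (S : X -> X -> Prop) x0 :
  Q x0 -> (forall x, Q x -> exists y, Q y /\ S x y) ->
  exists g : nat -> X, forall k, Q (g k) /\ S (g k) (g k.+1).
Proof.
move=> Qx0 step.
have /choice [next Hnext] : forall x, exists y, Q x -> Q y /\ S x y.
  move=> x; have [Qx|] := pselect (Q x); last by exists x.
  by have [y Hy] := step x Qx; exists y.
pose g k := iter k next x0.
have Qg k : Q (g k) by elim: k => //= k IH; case: (Hnext _ IH).
by exists g => k; split => //; case: (Hnext _ (Qg k)).
Qed.

Lemma ex_argmin X (Q : X -> Prop) (w : X -> nat) :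
  (exists x, Q x) -> exists2 x, Q x & forall y, Q y -> w x <= w y.
Proof.
move=> [x Qx]; have exn : exists n, `[< exists2 y, Q y & w y = n >].
  by exists (w x); apply/asboolP; exists x.
case: (ex_minnP exn) => _ /asboolP [y Qy <-] wmin.
by exists y => // z Qz; apply: wmin; apply/asboolP; exists z.
Qed.

Lemma increasing_chain (Q : nat -> Prop) (S : nat -> nat -> Prop) i0 :
  Q i0 -> (forall i, Q i -> exists j, [/\ i < j, Q j & S i j]) ->
  exists phi : nat -> nat,
    forall k, [/\ Q (phi k), phi k < phi k.+1 & S (phi k) (phi k.+1)].
Proof.
move=> Qi0 step.
have [|phi Hphi] := @dependent_choice _ Q (fun i j => i < j /\ S i j) i0 Qi0.
  by move=> i /step [j [ij Qj Sij]]; exists j.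
by exists phi => k; have [? []] := Hphi k.
Qed.

Definition transitive_rel A (R : A -> A -> Prop) :=
  forall y x z, R x y -> R y z -> R x z.

Definition good A (R : A -> A -> Prop) (f : nat -> A) :=
  exists i j, i < j /\ R (f i) (f j).

Definition almost_full A (P : A -> Prop) (R : A -> A -> Prop) :=
  forall f : nat -> A, (forall n, P (f n)) -> good R f.

Section AlmostFull.
Variables (A : Type) (P : A -> Prop) (R : A -> A -> Prop).

Lemma almost_full_chain f : almost_full P R -> (forall n, P (f n)) ->
  exists phi : nat -> nat,
    forall k, phi k < phi k.+1 /\ R (f (phi k)) (f (phi k.+1)).
Proof.
move=> afR Pf; pose terminal i := forall j, i < j -> ~ R (f i) (f j).
(* Terminal indices cannot form an infinite sequence, so they are bounded. *)
have [N HN] : exists N, forall i, N <= i -> exists j, i < j /\ R (f i) (f j).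
  apply: contrapT => /forallNP unbounded.
  have late N : exists i, N <= i /\ terminal i.
    have /existsNP[i /not_implyP[Ni /forallNP none]] := unbounded N.
    by exists i; split=> // j ij Rij; apply: (none j).
  have [i0 [_ Ti0]] := late 0.
  have [|phi Hphi] := @increasing_chain terminal (fun _ _ => True) i0 Ti0.
    by move=> i _; have [j [ij Tj]] := late i.+1; exists j.
  have phi_lt := homo_ltn ltn_trans (fun k => let: And3 _ lt _ := Hphi k in lt).
  have [i [j [ij Rij]]] := afR (f \o phi) (fun k => Pf _).
  by case: (Hphi i) => Ti _ _; apply: Ti (phi_lt _ _ ij) Rij.
have [|phi Hphi] := @increasing_chain (leq N) (fun i j => R (f i) (f j)) N (leqnn N).
  move=> i Ni; have [j [ij Rij]] := HN i Ni.
  by exists j; split => //; apply: leq_trans Ni (ltnW ij).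
by exists phi => k; case: (Hphi k).
Qed.

Lemma almost_full_inter (R' : A -> A -> Prop) :
  almost_full P R -> transitive_rel R -> almost_full P R' ->
  almost_full P (fun x y => R x y /\ R' x y).
Proof.
move=> afR tR afR' f Pf; have [phi Hphi] := almost_full_chain afR Pf.
have phi_lt := homo_ltn ltn_trans (fun k => proj1 (Hphi k)).
have R_phi := homo_ltn tR (fun k => proj2 (Hphi k)).
have [i [j [ij R'ij]]] := afR' (f \o phi) (fun k => Pf _).
by exists (phi i), (phi j); split; [apply: phi_lt | split; first exact: R_phi].
Qed.

Lemma almost_full_mono (P' : A -> Prop) (R' : A -> A -> Prop) :
  almost_full P R -> (forall x, P' x -> P x) -> (forall x y, R x y -> R' x y) ->
  almost_full P' R'.
Proof.
move=> afR PP' RR' f P'f; have [i [j [ij Rij]]] := afR f (fun n => PP' _ (P'f n)).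
by exists i, j; split => //; apply: RR'.
Qed.

Lemma almost_full_comap B (P' : B -> Prop) (g : B -> A) :
  almost_full P R -> (forall x, P' x -> P (g x)) ->
  almost_full P' (fun x y => R (g x) (g y)).
Proof. by move=> afR Pg f P'f; apply: afR (g \o f) (fun n => Pg _ (P'f n)). Qed.
End AlmostFull.

Lemma almost_full_eq_fin A (K : finType) (kind : A -> K) (P : A -> Prop) :
  almost_full P (fun x y => kind x = kind y).
Proof.
move=> f _; apply: contrapT => not_good.
have kind_inj : injective (fun i : 'I_#|K|.+1 => kind (f i)).
  move=> i j eq_ij; apply: val_inj; apply: contrapT => /eqP neq_ij; apply: not_good.
  by case: (ltngtP i j) neq_ij => // [ij|ji] _; [exists i, j | exists j, i].
by have := leq_card _ kind_inj; rewrite card_ord ltnn.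
Qed.

Lemma minimal_extension X (Q : seq X -> Prop) (w : X -> nat) :
  Q [::] -> (forall p, Q p -> exists x, Q (rcons p x)) ->
  exists g : nat -> X,
    forall n, Q (mkseq g n) /\ forall y, Q (rcons (mkseq g n) y) -> w (g n) <= w y.
Proof.
move=> Q0 ext; have [x0 _] := ext _ Q0.
have /choice [next Hnext] : forall p, exists x,
    Q p -> Q (rcons p x) /\ forall y, Q (rcons p y) -> w x <= w y.
  move=> p; have [Qp|] := pselect (Q p); last by exists x0.
  by have [x Qx minx] := ex_argmin w (ext p Qp); exists x.
pose pre n := iter n (fun p => rcons p (next p)) [::].
have pre_mkseq n : pre n = mkseq (next \o pre) n.
  by elim: n => //= n IH; rewrite mkseqS -IH.
have Qpre n : Q (pre n) by elim: n => //= n IH; case: (Hnext _ IH).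
exists (next \o pre) => n; rewrite -pre_mkseq; split=> //.
exact: (proj2 (Hnext _ (Qpre n))).
Qed.

Inductive seq_emb A B (R : A -> B -> Prop) : seq A -> seq B -> Prop :=
| seq_emb_nil t : seq_emb R [::] t
| seq_emb_skip s b t : seq_emb R s t -> seq_emb R s (b :: t)
| seq_emb_cons a s b t : R a b -> seq_emb R s t -> seq_emb R (a :: s) (b :: t).

Lemma seq_emb_trans A (R : A -> A -> Prop) :
  transitive_rel R -> transitive_rel (seq_emb R).
Proof.
move=> tR t s u st tu; elim: tu s st => {t u} [u|t b u _ IH|b t c u Rbc _ IH] s st.
- by inversion st; constructor.
- by apply: seq_emb_skip; apply: IH.
- inversion st; subst; first by constructor.
  + by apply: seq_emb_skip; apply: IH.
  + by apply: seq_emb_cons; [apply: tR Rbc | apply: IH].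
Qed.

Lemma seq_emb_map A B A' B' (f : A -> A') (g : B -> B') (R : A' -> B' -> Prop) s t :
  seq_emb R (map f s) (map g t) -> seq_emb (fun x y => R (f x) (g y)) s t.
Proof.
elim: t s => [|b t IH] [|a s] st; try by constructor.
- by inversion st.
- inversion st; subst; first by apply: seq_emb_skip; apply: IH.
  by apply: seq_emb_cons => //; apply: IH.
Qed.

Section Higman.
Variables (A : Type) (P : A -> Prop) (R : A -> A -> Prop).

Definition bad_seq (g : nat -> seq A) :=
  (forall n, List.Forall P (g n)) /\ forall i j, i < j -> ~ seq_emb R (g i) (g j).

Definition bad_prefix (p : seq (seq A)) := exists2 g, bad_seq g & mkseq g (size p) = p.

Lemma bad_seq_of_prefixes g : (forall n, bad_prefix (mkseq g n)) -> bad_seq g.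
Proof.
move=> pre_bad.
have agree n : exists2 h, bad_seq h & forall i, i <= n -> h i = g i.
  have [h bad_h] := pre_bad n.+1; rewrite size_mkseq => E.
  by exists h => // i i_le; have := congr1 (nth [::] ^~ i) E; rewrite !nth_mkseq.
split=> [n | i j ij].
  by have [h [Ph _] <-] := agree n.
have [h [_ bad_h] E] := agree j.
by rewrite -(E i (ltnW ij)) -(E j (leqnn j)); apply: bad_h.
Qed.

Section MinimalBadSeq.
Variables (g : nat -> seq A) (a : nat -> A) (t : nat -> seq A).
Hypotheses (bad_g : bad_seq g) (g_eq : forall n, g n = a n :: t n).
Hypothesis min_g :
  forall n y, bad_prefix (rcons (mkseq g n) y) -> size (g n) <= size y.

(* Otherwise [g] up to [phi 0] followed by the tails [t \o phi] would be a bad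
   sequence whose term at [phi 0] is shorter than [g (phi 0)]. *)
Lemma minimal_bad_seq_tails_good (phi : nat -> nat) :
  (forall k, phi k < phi k.+1) -> good (seq_emb R) (t \o phi).
Proof.
move=> phiS; apply: contrapT => tails_bad; have [Pg bad_g'] := bad_g.
have phi_ge0 k : phi 0 <= phi k.
  exact: homo_leq leqnn leq_trans (fun k => ltnW (phiS k)) _ _ (leq0n k).
pose F i := if i < phi 0 then g i else t (phi (i - phi 0)).
have PF i : List.Forall P (F i).
  rewrite /F; case: ifP => _; first exact: Pg.
  by have := Pg (phi (i - phi 0)); rewrite g_eq; apply: List.Forall_inv_tail.
suff: bad_prefix (rcons (mkseq g (phi 0)) (t (phi 0))).
  by move/min_g; rewrite g_eq /= ltnn.
exists F; last first.
  rewrite size_rcons size_mkseq mkseqS /F ltnn subnn; congr rcons.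
  by apply/eq_in_map => i; rewrite mem_iota => /andP[_ ->].
split=> // i j ij; rewrite /F; case: ifP => i_lt; case: ifP => j_lt.
- exact: bad_g'.
- move=> emb_ij; apply: (bad_g' i (phi (j - phi 0))).
    exact: leq_trans i_lt (phi_ge0 _).
  by rewrite [g (phi _)]g_eq; apply: seq_emb_skip.
- by rewrite (ltn_trans ij j_lt) in i_lt.
- move=> emb_ij; apply: tails_bad; exists (i - phi 0), (j - phi 0); split => //.
  by rewrite ltn_sub2rE // leqNgt i_lt.
Qed.
End MinimalBadSeq.

Lemma higman :
  almost_full P R -> transitive_rel R -> almost_full (List.Forall P) (seq_emb R).
Proof.
move=> afR tR f Pf; apply: contrapT => f_bad.
have [||g Hg] := @minimal_extension _ bad_prefix size.
- by exists f => //; split => // i j ij emb_ij; apply: f_bad; exists i, j.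
- move=> p [h bad_h Eh]; exists (h (size p)); exists h => //.
  by rewrite size_rcons mkseqS Eh.
have bad_g : bad_seq g := bad_seq_of_prefixes (fun n => proj1 (Hg n)).
have [Pg bad_g'] := bad_g.
have g_size n : 0 < size (g n).
  by case E: (g n) => //; case: (bad_g' n n.+1 (ltnSn n)); rewrite E; constructor.
have [x0 _] : exists x0 : A, True by case: (g 0) (g_size 0) => // x0; exists x0.
pose a n := head x0 (g n); pose t n := behead (g n).
have g_eq n : g n = a n :: t n by rewrite /a /t; case: (g n) (g_size n).
have Pa n : P (a n) by have := Pg n; rewrite g_eq; apply: List.Forall_inv.
have [phi Hphi] := almost_full_chain afR Pa.
have phi_lt := homo_ltn ltn_trans (fun k => proj1 (Hphi k)).
have Ra := homo_ltn tR (fun k => proj2 (Hphi k)).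
have min_g n y : bad_prefix (rcons (mkseq g n) y) -> size (g n) <= size y.
  exact: (proj2 (Hg n)).
have [i [j [ij t_ij]]] :=
  minimal_bad_seq_tails_good bad_g g_eq min_g (fun k => proj1 (Hphi k)).
apply: (bad_g' (phi i) (phi j) (phi_lt _ _ ij)); rewrite !g_eq.
by apply: seq_emb_cons => //; apply: Ra.
Qed.
End Higman.
(** * Label trees *)

Lemma Forall_eq_map A B (f g : A -> B) s :
  List.Forall (fun x => f x = g x) s -> map f s = map g s.
Proof. by elim=> //= x {}s fg _ ->; rewrite fg. Qed.

Lemma Forall_eq_has A (p q : pred A) s :
  List.Forall (fun x => p x = q x) s -> has p s = has q s.
Proof. by elim=> //= x {}s pq _ ->; rewrite pq. Qed.

Section TreeInd.
Variables (V : Type) (m : nat) (P : tree V m -> Prop).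
Hypotheses (P_Leaf : forall v, P (Leaf v))
           (P_Node : forall M cs, List.Forall P cs -> P (Node M cs)).

Fixpoint tree_nested_ind (t : tree V m) : P t :=
  match t with
  | Leaf v => P_Leaf v
  | Node M cs => P_Node M ((fix all_P cs : List.Forall P cs :=
      match cs with
      | [::] => List.Forall_nil P
      | c :: cs' => List.Forall_cons c (tree_nested_ind c) (all_P cs')
      end) cs)
  end.
End TreeInd.

Section TreeMap.
Variables (V W : eqType) (m m' : nat) (g : V -> W)
  (phi : ('I_m -> 'I_m -> bool) -> 'I_m' -> 'I_m' -> bool).

Fixpoint tmap (t : tree V m) : tree W m' :=
  match t with
  | Leaf v => Leaf (g v)
  | Node M cs => Node (phi M) (map tmap cs)
  end.

Lemma leaves_tmap t : leaves (tmap t) = map g (leaves t).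
Proof.
elim/tree_nested_ind: t => //= M cs IH.
by rewrite map_flatten -!map_comp; congr flatten; apply: Forall_eq_map.
Qed.

Lemma depth_tmap t : depth (tmap t) = depth t.
Proof.
elim/tree_nested_ind: t => //= M cs IH.
by rewrite -map_comp; congr (foldr _ _ _).+1; apply: Forall_eq_map.
Qed.

Lemma tadj_tmap (lamV : V -> 'I_m) (lamW : W -> 'I_m') t u w :
  injective g ->
  (forall M u w, phi M (lamW (g u)) (lamW (g w)) = M (lamV u) (lamV w)) ->
  tadj lamW (tmap t) (g u) (g w) = tadj lamV t u w.
Proof.
move=> g_inj phiE; elim/tree_nested_ind: t => // M cs IH.
have /= -> := leaves_tmap (Node M cs).
rewrite /= !mem_map // phiE !has_map; congr (_ || [&& _, _, ~~ _ & _]).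
  apply: Forall_eq_has; apply: List.Forall_impl IH => c /= IHc.
  by rewrite leaves_tmap !mem_map // IHc.
by apply: eq_has => c /=; rewrite leaves_tmap !mem_map.
Qed.
End TreeMap.

Section LabelTrees.
Variable k : nat.
Notation ltree := (tree 'I_k k).

(* Fuel-indexed because [seq_emb] cannot take the recursive call of a
   structural fixpoint as argument; fuel [d.+1] suffices at depth [d]. *)
Fixpoint ltree_emb n (s t : ltree) : Prop :=
  match n, s, t with
  | n.+1, Leaf a, Leaf b => a = b
  | n.+1, Node M cs, Node M' cs' => M = M' /\ seq_emb (ltree_emb n) cs cs'
  | _, _, _ => False
  end.

Lemma ltree_emb_trans n : transitive_rel (ltree_emb n).
Proof.
elim: n => [|n IH] [a|M cs] [b|M' cs'] [c|M'' cs''] //=; first by move=> -> ->.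
by move=> [-> cs_cs'] [-> cs'_cs'']; split => //; apply: seq_emb_trans cs_cs' cs'_cs''.
Qed.

Definition root_kind (s : ltree) : 'I_k + {ffun 'I_k * 'I_k -> bool} :=
  match s with Leaf a => inl a | Node M _ => inr [ffun p => M p.1 p.2] end.

Definition children (s : ltree) := if s is Node _ cs then cs else [::].

Lemma almost_full_ltree_emb_children n (P : ltree -> Prop) :
  almost_full P (ltree_emb n) ->
  almost_full (fun s => List.Forall P (children s)) (ltree_emb n.+1).
Proof.
move=> afP; pose P' s := List.Forall P (children s).
have af_kind := almost_full_eq_fin (P := P') root_kind.
have af_children := almost_full_comap (P' := P')
  (higman afP (@ltree_emb_trans n)) (fun _ Ps => Ps).
apply: (almost_full_mono (almost_full_inter af_kind _ af_children)) => //.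
  by move=> s t u -> ->.
move=> [a|M cs] [b|M' cs'] [] //= [] //.
move=> /ffunP M_M' cs_cs'; split => //.
by apply/funext => x; apply/funext => y; have := M_M' (x, y); rewrite !ffunE.
Qed.

Lemma children_depth d (s : ltree) :
  depth s <= d.+1 -> List.Forall (fun c => depth c <= d) (children s).
Proof.
case: s => //= M cs; rewrite ltnS; elim: cs => //= c cs IH.
by rewrite geq_max => /andP[c_d /IH cs_d]; constructor.
Qed.

Lemma almost_full_depth d :
  almost_full (fun s : ltree => depth s <= d) (ltree_emb d.+1).
Proof.
elim: d => [|d IH].
  have af0 : almost_full (fun _ : ltree => False) (ltree_emb 0) by move=> f /(_ 0).
  by apply: (almost_full_mono (almost_full_ltree_emb_children af0)) => // -[a|M []].
by apply: (almost_full_mono (almost_full_ltree_emb_children IH)) => // s /children_depth.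
Qed.
End LabelTrees.

(** * Induced subgraphs and minimal non-members *)

Definition embeds (H G : graph) :=
  exists f : vert H -> vert G, injective f /\ forall x y, adj x y = adj (f x) (f y).

Lemma hereditary_embeds (C : graph_class) H G :
  hereditary C -> embeds H G -> C G -> C H.
Proof. by move=> hC [f [f_inj f_adj]]; apply: hC f_inj f_adj. Qed.

Lemma embeds_trans (K H G : graph) : embeds K H -> embeds H G -> embeds K G.
Proof.
move=> [f [f_inj f_adj]] [g [g_inj g_adj]].
by exists (g \o f); split=> [|x y]; [apply: inj_comp | rewrite f_adj g_adj].
Qed.

Lemma embeds_empty (H G : graph) : #|vert H| = 0 -> embeds H G.
Proof.
move=> H0; have no_vertex (x : vert H) : False by have := card0_eq H0 x; rewrite !inE.
by exists (fun x => match no_vertex x with end); split=> x; case: (no_vertex x).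
Qed.

Section Induced.
Variables (G : graph) (P : pred (vert G)).

Definition induced_adj : rel {x | P x} := fun x y => adj (val x) (val y).
Lemma induced_adj_sym : symmetric induced_adj. Proof. by move=> x y; apply: adj_sym. Qed.
Lemma induced_adj_irr : irreflexive induced_adj. Proof. by move=> x; apply: adj_irr. Qed.
Definition induced := Graph induced_adj_sym induced_adj_irr.

Lemma induced_embeds : embeds induced G.
Proof. by exists val; split => //; apply: val_inj. Qed.

Lemma embeds_induced (H : graph) (f : vert H -> vert G) :
  injective f -> (forall x y, adj x y = adj (f x) (f y)) -> (forall x, P (f x)) ->
  embeds H induced.
Proof.
move=> f_inj f_adj Pf; exists (fun x => exist _ (f x) (Pf x)); split=> // x y.
by move/(congr1 val)/f_inj.
Qed.
End Induced.

Definition del (G : graph) (w : vert G) := induced (predC1 w).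

Lemma card_del (G : graph) (w : vert G) : #|vert (del w)| = #|vert G|.-1.
Proof. by rewrite card_sig cardC1. Qed.

Definition minimal_nonmember (C : graph_class) (H : graph) :=
  ~ C H /\ forall w : vert H, C (del w).

Lemma exists_minimal_nonmember (C : graph_class) G :
  ~ C G -> exists2 H, minimal_nonmember C H & embeds H G.
Proof.
move: (ltnSn #|vert G|); move: {2}#|vert G|.+1 => n.
elim: n G => // n IH G G_n notCG.
have [all_del|/existsNP[w notCw]] := pselect (forall w : vert G, C (del w)).
  by exists G; [split | exists id; split].
have [|H min_H H_w] := IH (del w) _ notCw.
  by rewrite card_del -ltnS prednK //; apply/card_gt0P; exists w.
by exists H => //; apply: embeds_trans H_w (induced_embeds _).
Qed.

Lemma embeds_minimal_nonmember (C : graph_class) H G :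
  hereditary C -> minimal_nonmember C G -> embeds H G -> #|vert H| < #|vert G| -> C H.
Proof.
move=> hC [_ C_del] [f [f_inj f_adj]] H_lt_G.
have [w w_notin] : exists w, w \notin codom f.
  apply: contrapT => all_in; move: H_lt_G; rewrite ltnNge -(card_codom f_inj).
  rewrite subset_leq_card //; apply/subsetP => w _.
  by apply: contrapT => /negP w_notin; apply: all_in; exists w.
have f_neq x : f x != w by apply: contraNneq w_notin => <-; apply: codom_f.
exact: hereditary_embeds hC (embeds_induced f_inj f_adj f_neq) (C_del w).
Qed.

(** * Tree-models and the bound on minimal non-members *)

Lemma mem_leaves_Node (V : eqType) m M (cs : seq (tree V m)) u :
  (u \in leaves (Node M cs)) = has (fun c => u \in leaves c) cs.
Proof. by elim: cs => //= c cs IH; rewrite mem_cat IH. Qed.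

Lemma uniq_leaves_cons (V : eqType) m M (c : tree V m) cs :
  uniq (leaves (Node M (c :: cs))) -> uniq (leaves c) /\ uniq (leaves (Node M cs)).
Proof. by rewrite [leaves _]/= cat_uniq => /and3P[]. Qed.

Lemma leaves_cons_disjoint (V : eqType) m M (c : tree V m) cs x :
  uniq (leaves (Node M (c :: cs))) -> x \in leaves c -> x \notin leaves (Node M cs).
Proof.
rewrite [leaves _]/= cat_uniq => /and3P[_ disj _] xc.
by apply: contra disj => x_cs; apply/hasP; exists x.
Qed.

Lemma tadj_cons (V : eqType) m (lam : V -> 'I_m) M (c : tree V m) cs u w :
  uniq (leaves (Node M (c :: cs))) ->
  tadj lam (Node M (c :: cs)) u w =
    if u \in leaves c then
      if w \in leaves c then tadj lam c u w
      else (w \in leaves (Node M cs)) && M (lam u) (lam w)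
    else if w \in leaves c then (u \in leaves (Node M cs)) && M (lam u) (lam w)
    else tadj lam (Node M cs) u w.
Proof.
move=> U; have notin_cs x p : x \in leaves c ->
    subpred p (fun c' => x \in leaves c') -> has p cs = false.
  move=> /(leaves_cons_disjoint U); rewrite mem_leaves_Node => x_cs sub.
  by apply: contraNF x_cs; apply: sub_has.
rewrite /= !mem_cat -![_ \in flatten _]/(_ \in leaves (Node M cs)) !mem_leaves_Node.
case: ifP => uc; case: ifP => wc /=.
- by rewrite (notin_cs u _ uc) ?orbF // => ? /andP[].
- rewrite [X in X || _](notin_cs u _ uc) ?[X in ~~ X](notin_cs u _ uc) //=;
  by move=> ? /andP[].
- rewrite [X in X || _](notin_cs w _ wc) ?[X in ~~ X](notin_cs w _ wc) ?andbT //=;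
  by move=> ? /andP[_] //; case/andP.
- by [].
Qed.

Definition label_tree (V : eqType) m (lam : V -> 'I_m) : tree V m -> tree 'I_m m :=
  tmap lam (fun M => M).

Section ModelEmbedding.
Variables (V1 V2 : eqType) (m : nat) (lam1 : V1 -> 'I_m) (lam2 : V2 -> 'I_m).

Definition model_emb (t1 : tree V1 m) (t2 : tree V2 m) (f : V1 -> V2) :=
  [/\ {in leaves t1, forall u, f u \in leaves t2},
      {in leaves t1 &, injective f},
      {in leaves t1, forall u, lam2 (f u) = lam1 u} &
      {in leaves t1 &, forall u w, tadj lam2 t2 (f u) (f w) = tadj lam1 t1 u w}].

Lemma model_emb_leaf u1 u2 :
  lam1 u1 = lam2 u2 -> model_emb (Leaf u1) (Leaf u2) (fun=> u2).
Proof.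
move=> lam12; split=> [u|u w|u|u w]; rewrite ?inE //.
- by move=> /eqP -> /eqP ->.
- by move=> /eqP ->.
Qed.

Lemma model_emb_nil M t2 f : model_emb (Node M [::]) t2 f.
Proof. by split. Qed.

Lemma model_emb_skip M c2 cs1 cs2 f :
  uniq (leaves (Node M (c2 :: cs2))) ->
  model_emb (Node M cs1) (Node M cs2) f ->
  model_emb (Node M cs1) (Node M (c2 :: cs2)) f.
Proof.
move=> U2 [f_in f_inj f_lam f_adj]; split=> // [u u_in|u w u_in w_in].
  by rewrite [leaves _]/= mem_cat orbC f_in.
have notin_c2 x : x \in leaves (Node M cs2) -> (x \in leaves c2) = false.
  exact: contraTF (leaves_cons_disjoint U2).
by rewrite tadj_cons // !notin_c2 ?f_in // f_adj.
Qed.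

Lemma model_emb_cons M c1 c2 cs1 cs2 fc fr :
  uniq (leaves (Node M (c1 :: cs1))) -> uniq (leaves (Node M (c2 :: cs2))) ->
  model_emb c1 c2 fc -> model_emb (Node M cs1) (Node M cs2) fr ->
  model_emb (Node M (c1 :: cs1)) (Node M (c2 :: cs2))
            (fun u => if u \in leaves c1 then fc u else fr u).
Proof.
move=> U1 U2 [fc_in fc_inj fc_lam fc_adj] [fr_in fr_inj fr_lam fr_adj].
have in_cs1 u : u \in leaves (Node M (c1 :: cs1)) -> u \notin leaves c1 ->
    u \in leaves (Node M cs1).
  by rewrite [leaves _]/= mem_cat => /orP[->|].
have in_cs2 u : u \in leaves (Node M cs2) -> u \in leaves (Node M (c2 :: cs2)).
  by rewrite [leaves (Node M (c2 :: _))]/= mem_cat orbC => ->.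
have notin_c2 u : u \in leaves (Node M cs1) -> (fr u \in leaves c2) = false.
  by move/fr_in; apply: contraTF (leaves_cons_disjoint U2).
split=> [u u_in|u w u_in w_in|u u_in|u w u_in w_in].
- case: ifP => u_c1; last by rewrite in_cs2 ?fr_in ?in_cs1 ?u_c1.
  by rewrite [leaves _]/= mem_cat fc_in.
- case: ifP => u_c1; case: ifP => w_c1; first exact: fc_inj.
  + by move=> fuw; move: (fc_in _ u_c1); rewrite fuw notin_c2 ?in_cs1 ?w_c1.
  + by move=> fuw; move: (fc_in _ w_c1); rewrite -fuw notin_c2 ?in_cs1 ?u_c1.
  + by apply: fr_inj; rewrite in_cs1 ?u_c1 ?w_c1.
- by case: ifP => u_c1; [exact: fc_lam | rewrite fr_lam ?in_cs1 ?u_c1].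
rewrite !tadj_cons //.
case: (boolP (u \in leaves c1)) => u_c1; case: (boolP (w \in leaves c1)) => w_c1.
- by rewrite !fc_in ?fc_adj.
- by rewrite fc_in // notin_c2 ?in_cs1 // fc_lam // fr_lam ?fr_in ?in_cs1.
- by rewrite notin_c2 ?in_cs1 // fc_in // fc_lam // fr_lam ?fr_in ?in_cs1.
- by rewrite !notin_c2 ?in_cs1 // fr_adj ?in_cs1.
Qed.

(* [x2] is a junk value: it is only used on the leafless tree [Node M [::]]. *)
Lemma model_emb_Node (x2 : V2) n M cs1 cs2 :
  (forall c1 c2, uniq (leaves c1) -> uniq (leaves c2) ->
     ltree_emb n (label_tree lam1 c1) (label_tree lam2 c2) ->
     exists f, model_emb c1 c2 f) ->
  seq_emb (ltree_emb n) (map (label_tree lam1) cs1) (map (label_tree lam2) cs2) ->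
  uniq (leaves (Node M cs1)) -> uniq (leaves (Node M cs2)) ->
  exists f, model_emb (Node M cs1) (Node M cs2) f.
Proof.
move=> emb_children /seq_emb_map.
elim=> {cs1 cs2} [cs2 _ _|cs1 c2 cs2 _ IH U1 U2|c1 cs1 c2 cs2 c12 _ IH U1 U2].
- by exists (fun=> x2); apply: model_emb_nil.
- have [f emb_f] := IH U1 (proj2 (uniq_leaves_cons U2)).
  by exists f; apply: model_emb_skip.
- have [Uc1 Ucs1] := uniq_leaves_cons U1; have [Uc2 Ucs2] := uniq_leaves_cons U2.
  have [fc emb_fc] := emb_children _ _ Uc1 Uc2 c12.
  have [fr emb_fr] := IH Ucs1 Ucs2.
  by eexists; apply: model_emb_cons emb_fc emb_fr.
Qed.

Lemma model_emb_of_ltree_emb (x2 : V2) n t1 t2 :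
  uniq (leaves t1) -> uniq (leaves t2) ->
  ltree_emb n (label_tree lam1 t1) (label_tree lam2 t2) -> exists f, model_emb t1 t2 f.
Proof.
elim: n t1 t2 => // n IH [u1|M cs1] [u2|M' cs2] //= U1 U2.
- by move=> lam12; exists (fun=> u2); apply: model_emb_leaf.
- by move=> [<- emb_cs]; apply: model_emb_Node x2 n M cs1 cs2 (IH) emb_cs U1 U2.
Qed.
End ModelEmbedding.

Definition tree_model (G : graph) d k (lam : vert G -> 'I_k) (t : tree (vert G) k) :=
  [/\ depth t <= d, uniq (leaves t), forall x, x \in leaves t &
      forall u w, u != w -> adj u w = tadj lam t u w].

Arguments tree_model : clear implicits.

Lemma tree_model_embeds (H G : graph) d d' k lamH tH lamG tG f :
  tree_model H d k lamH tH -> tree_model G d' k lamG tG ->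
  model_emb lamH lamG tH tG f -> embeds H G.
Proof.
move=> [_ _ allH adjH] [_ _ _ adjG] [_ f_inj _ f_adj].
have {}f_inj : injective f by move=> x y; apply: f_inj; apply: allH.
exists f; split => // x y; have [->|xy] := eqVneq x y; first by rewrite !adj_irr.
by rewrite adjH // adjG ?(inj_eq f_inj) // f_adj.
Qed.

Lemma almost_full_tree_models d k :
  almost_full (fun G => exists lam t, tree_model G d k lam t) embeds.
Proof.
move=> Gs models_Gs.
have [[n Gn0] | nonempty] := pselect (exists n, #|vert (Gs n)| = 0).
  by exists n, n.+1; split => //; apply: embeds_empty.
have /choice [s Hs] : forall n, exists s : tree 'I_k k,
    exists lam t, tree_model (Gs n) d k lam t /\ s = label_tree lam t.
  by move=> n; have [lam [t model_t]] := models_Gs n; exists (label_tree lam t), lam, t.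
have [|i [j [ij s_ij]]] := @almost_full_depth k d s.
  by move=> n; have [lam [t [[dt _ _ _] ->]]] := Hs n; rewrite depth_tmap.
have [lamI [tI [model_I EI]]] := Hs i; have [lamJ [tJ [model_J EJ]]] := Hs j.
have /card_gt0P [x2 _] : 0 < #|vert (Gs j)|.
  by rewrite lt0n; apply/eqP => Gj0; apply: nonempty; exists j.
case: (model_I) (model_J) => _ UI _ _ [_ UJ _ _].
rewrite EI EJ in s_ij; have [f emb_f] := model_emb_of_ltree_emb x2 UI UJ s_ij.
by exists i, j; split => //; apply: tree_model_embeds model_I model_J emb_f.
Qed.

Section AddVertex.
Variable m : nat.
Notation label := (option (bool * 'I_m)).
Notation k := #|{: label}|.

(* A vertex [x != v] gets the label [Some (adj v x, old label of x)] and [v]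
   gets [None]; the root matrix joins [v] to the vertices whose bit is set. *)
Definition untag_mx (M : 'I_m -> 'I_m -> bool) (a b : 'I_k) :=
  if (enum_val a, enum_val b) is (Some (_, i), Some (_, j)) then M i j else false.

Definition apex_mx (a b : 'I_k) :=
  match enum_val a, enum_val b with
  | None, Some (e, _) | Some (e, _), None => e
  | _, _ => false
  end.

Variables (H : graph) (v : vert H).
Variables (lam : vert (del v) -> 'I_m) (t : tree (vert (del v)) m).
Hypotheses (t_leaves : perm_eq (leaves t) (enum (vert (del v))))
           (t_adj : forall u w, u != w -> adj u w = tadj lam t u w).

Definition add_label (x : vert H) : 'I_k :=
  enum_rank (omap (fun y => (adj v x, lam y)) (insub x : option (vert (del v)))).

Definition add_tree := Node apex_mx [:: tmap val untag_mx t; Leaf v].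

Lemma add_label_val (y : vert (del v)) :
  add_label (val y) = enum_rank (Some (adj v (val y), lam y)).
Proof. by rewrite /add_label valK. Qed.

Lemma add_label_v : add_label v = enum_rank None.
Proof. by rewrite /add_label insubF //= eqxx. Qed.

Lemma mem_leaves_tmap_val x : (x \in leaves (tmap val untag_mx t)) = (x != v).
Proof.
rewrite leaves_tmap; have [->|xv] := eqVneq x v.
  by apply/mapP => -[y _ yv]; move: (valP y); rewrite -yv /= eqxx.
by apply/mapP; exists (Sub x xv : vert (del v)); rewrite ?(perm_mem t_leaves) ?mem_enum.
Qed.

Lemma uniq_leaves_add_tree : uniq (leaves add_tree).
Proof.
rewrite [leaves _]/= cat_uniq /= mem_leaves_tmap_val eqxx andbT leaves_tmap.
by rewrite (map_inj_uniq val_inj) (perm_uniq t_leaves) enum_uniq.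
Qed.

Lemma add_tree_model : tree_model H (depth t).+1 k add_label add_tree.
Proof.
split=> [|||u w]; first by rewrite /= depth_tmap maxn0.
- exact: uniq_leaves_add_tree.
- by move=> x; rewrite [leaves _]/= mem_cat mem_leaves_tmap_val inE orNb.
have leaf_v x : (x \in leaves (Node apex_mx [:: Leaf v])) = (x == v).
  by rewrite [leaves _]/= inE.
rewrite tadj_cons ?uniq_leaves_add_tree // !mem_leaves_tmap_val !leaf_v.
have val_of x : x != v -> exists y : vert (del v), x = val y.
  by move=> xv; exists (Sub x xv).
have [->|/val_of[y ->]] := eqVneq u v; have [->|/val_of[z ->]] := eqVneq w v.
- by [].
- by rewrite /= add_label_v add_label_val /apex_mx !enum_rankK.
- by rewrite /= adj_sym add_label_v add_label_val /apex_mx !enum_rankK.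
rewrite (inj_eq val_inj) => yz.
rewrite /= (tadj_tmap (lamV := lam)) -?t_adj //; first exact: val_inj.
by move=> M y' z'; rewrite !add_label_val /untag_mx !enum_rankK.
Qed.
End AddVertex.

Lemma tree_model_add_vertex (H : graph) (v : vert H) d m :
  has_tree_model (del v) d m ->
  exists lam t, tree_model H d.+1 #|{: option (bool * 'I_m)}| lam t.
Proof.
move=> [lam [t [t_d t_leaves _ t_adj]]]; exists (add_label lam), (add_tree t).
have [d_t U all_t adj_t] := add_tree_model t_leaves t_adj.
by split=> //; apply: leq_trans d_t _.
Qed.

Lemma minimal_nonmember_tree_model (C : graph_class) d m H :
  (forall G, C G -> has_tree_model G d m) -> minimal_nonmember C H -> 0 < #|vert H| ->
  exists lam t, tree_model H d.+1 #|{: option (bool * 'I_m)}| lam t.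
Proof.
move=> C_model [_ C_del] /card_gt0P[v _].
exact: tree_model_add_vertex (C_model _ (C_del v)).
Qed.

Lemma minimal_nonmembers_bounded (C : graph_class) :
  hereditary C -> bounded_shrubdepth C ->
  exists K, forall H, minimal_nonmember C H -> #|vert H| <= K.
Proof.
move=> hC [d [m C_model]]; apply: contrapT => unbounded.
pose Q H := minimal_nonmember C H /\ 0 < #|vert H|.
have larger K : exists H, Q H /\ K < #|vert H|.
  apply: contrapT => none; apply: unbounded; exists K => H min_H.
  rewrite leqNgt; apply/negP => K_lt; apply: none; exists H.
  by do !split=> //; apply: leq_ltn_trans K_lt.
have [H0 [Q_H0 _]] := larger 0.
have [Hs Hs_spec] := @dependent_choice _ Q (fun H H' => #|vert H| < #|vert H'|)
  H0 Q_H0 (fun H _ => larger #|vert H|).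
have Hs_lt := homo_ltn ltn_trans (fun n => proj2 (Hs_spec n)).
have [|i [j [ij Hi_Hj]]] :=
  @almost_full_tree_models d.+1 #|{: option (bool * 'I_m)}| Hs.
  move=> n; have [[min_n pos_n] _] := Hs_spec n.
  exact: minimal_nonmember_tree_model min_n pos_n.
have [[[notC_i _] _] _] := Hs_spec i; have [[min_j _] _] := Hs_spec j.
by apply: notC_i; apply: embeds_minimal_nonmember hC min_j Hi_Hj (Hs_lt _ _ ij).
Qed.

(** * First-order definability *)

(* Closed at every level, and true even in the graph without vertices. *)
Definition FTrue := FAll (FEq 0 0).
Definition FFalse := FNot FTrue.
Definition lit (phi : formula) (b : bool) := if b then phi else FNot phi.
Definition big_and (s : seq formula) := foldr FAnd FTrue s.
Definition big_or (s : seq formula) := foldr FOr FFalse s.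

Lemma closed_big_and n T (g : T -> formula) s :
  (forall x, closed_at n (g x)) -> closed_at n (big_and (map g s)).
Proof. by move=> closed_g; elim: s => //= x s ->; rewrite closed_g. Qed.

Lemma closed_big_or n T (g : T -> formula) s :
  (forall x, closed_at n (g x)) -> closed_at n (big_or (map g s)).
Proof. by move=> closed_g; elim: s => //= x s ->; rewrite closed_g. Qed.

Lemma closed_iter_FAll n k phi : closed_at k (iter n FAll phi) = closed_at (n + k) phi.
Proof. by elim: n k => //= n IH k; rewrite IH addnS. Qed.

Lemma onth_size T (s : seq T) i : i < size s -> exists x, onth s i = Some x.
Proof. by rewrite -onthTE; case: (onth s i) => // x; exists x. Qed.

Definition oadj (G : graph) (x y : option (vert G)) :=
  if (x, y) is (Some x, Some y) then adj x y else false.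

Section Satisfaction.
Variables (G : graph) (env : seq (vert G)).

Lemma sat_FTrue : sat env FTrue. Proof. by []. Qed.

Lemma sat_big_and (T : eqType) (g : T -> formula) s :
  sat env (big_and (map g s)) <-> forall x, x \in s -> sat env (g x).
Proof.
elim: s => [|x s IH] /=; first by split.
rewrite IH; split=> [[gx gs] y|all_s]; first by rewrite inE => /predU1P[->|/gs].
by split=> [|y ys]; apply: all_s; rewrite inE ?eqxx ?ys ?orbT.
Qed.

Lemma sat_big_or (T : eqType) (g : T -> formula) s :
  sat env (big_or (map g s)) <-> exists2 x, x \in s & sat env (g x).
Proof.
elim: s => [|x s IH] /=; first by split=> [/(_ sat_FTrue) []|[]].
rewrite IH; split=> [[gx|[y ys gy]]|[y]]; first by exists x; rewrite ?inE ?eqxx.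
  by exists y; rewrite // inE ys orbT.
by rewrite inE => /predU1P[-> gx|ys gy]; [left | right; exists y].
Qed.

Lemma sat_lit_FEq i j b : i < size env -> j < size env ->
  sat env (lit (FEq i j) b) <-> (onth env i == onth env j) = b.
Proof.
move=> /onth_size[x x_i] /onth_size[y y_j]; rewrite /lit.
case: b => /=; rewrite x_i y_j (inj_eq (@Some_inj _)); first exact: (rwP eqP).
by split=> [/eqP/negbTE | /negbT/eqP].
Qed.

Lemma sat_lit_FAdj i j b : i < size env -> j < size env ->
  sat env (lit (FAdj i j) b) <-> oadj (onth env i) (onth env j) = b.
Proof.
move=> /onth_size[x x_i] /onth_size[y y_j]; rewrite /lit.
case: b => /=; rewrite x_i y_j //=.
by split=> [/negP/negbTE | /negbT/negP].
Qed.
End Satisfaction.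

Lemma sat_iter_FAll (G : graph) (env : seq (vert G)) n phi :
  sat env (iter n FAll phi) <-> forall e, size e = n -> sat (e ++ env) phi.
Proof.
elim: n env => [|n IH] env /=; first by split=> [phi_env [] | /(_ [::] erefl)].
split=> [all_x e|all_e x].
  case/lastP: e => // e x; rewrite size_rcons cat_rcons => -[size_e].
  exact: (proj1 (IH (x :: env)) (all_x x) e size_e).
by apply/IH => e size_e; rewrite -cat_rcons; apply: all_e; rewrite size_rcons size_e.
Qed.

Section AtomicType.
Variable N : nat.

Definition atomic_type := {ffun 'I_N * 'I_N -> bool * bool}.

Definition tuple_type (G : graph) (env : seq (vert G)) : atomic_type :=
  [ffun p : 'I_N * 'I_N =>
     (onth env p.1 == onth env p.2, oadj (onth env p.1) (onth env p.2))].

Definition diagram (t : atomic_type) : formula :=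
  big_and [seq FAnd (lit (FEq p.1 p.2) (t p).1) (lit (FAdj p.1 p.2) (t p).2)
          | p : 'I_N * 'I_N <- enum {: 'I_N * 'I_N}].

Lemma closed_diagram t : closed_at N (diagram t).
Proof.
apply: closed_big_and => p.
by rewrite /lit; case: (t p).1; case: (t p).2; rewrite /= !ltn_ord.
Qed.

Lemma sat_diagram (G : graph) (env : seq (vert G)) t :
  size env = N -> sat env (diagram t) <-> tuple_type env = t.
Proof.
move=> size_env; rewrite sat_big_and.
have lt_env (i : 'I_N) : i < size env by rewrite size_env.
have sat_EqE := sat_lit_FEq _ (lt_env _) (lt_env _).
have sat_AdjE := sat_lit_FAdj _ (lt_env _) (lt_env _).
split=> [sat_all | <- p _].
  apply/ffunP => p; rewrite ffunE; move: (sat_all p (mem_enum _ p)) => /= [].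
  by rewrite sat_EqE sat_AdjE => -> ->; case: (t p).
by split; [apply/sat_EqE | apply/sat_AdjE]; rewrite ffunE.
Qed.
End AtomicType.

Definition induced_on (G : graph) (env : seq (vert G)) := induced (fun x => x \in env).

Lemma tuple_type_embeds N (G G' : graph) (env : seq (vert G)) (env' : seq (vert G')) :
  size env = N -> size env' = N -> tuple_type N env = tuple_type N env' ->
  embeds (induced_on env) (induced_on env').
Proof.
case: env' => [|y0 e'] size_env size_env' E.
  rewrite -size_env' in size_env; move/size0nil: size_env => ->.
  by apply: embeds_empty; rewrite card_sig; apply: eq_card0.
set env' := y0 :: e' in size_env' E *.
have idx_lt (x : vert (induced_on env)) : index (val x) env < N.
  by rewrite -size_env index_mem (valP x).
pose i x := Ordinal (idx_lt x); pose g x := nth y0 env' (i x).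
have onth_i x : onth env (i x) = Some (val x).
  by rewrite onthE (nth_map (val x)) ?nth_index ?index_mem ?(valP x).
have onth'_i x : onth env' (i x) = Some (g x) by rewrite onthE (nth_map y0) // size_env'.
have type_xy x y : (Some (val x) == Some (val y), adj (val x) (val y)) =
                   (Some (g x) == Some (g y), adj (g x) (g y)).
  have := congr1 (fun t : atomic_type N => t (i x, i y)) E.
  by rewrite !ffunE /= !onth_i !onth'_i.
apply: (@embeds_induced _ _ _ g) => [x y gxy | x y | x].
- by apply/val_inj; case: (type_xy x y); rewrite gxy eqxx => /eqP[].
- by case: (type_xy x y).
- by rewrite mem_nth // size_env'.
Qed.

Section ClassSentence.
Variables (C : graph_class) (N : nat).

Definition realized (t : atomic_type N) : bool :=
  `[< exists G (env : seq (vert G)),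
        [/\ size env = N, tuple_type N env = t & C (induced_on env)] >].

Definition class_sentence :=
  iter N FAll (big_or [seq diagram t | t <- enum {: atomic_type N} & realized t]).

Lemma sentence_class_sentence : sentence class_sentence.
Proof.
rewrite /sentence closed_iter_FAll addn0.
by apply: closed_big_or => t; apply: closed_diagram.
Qed.

Lemma models_class_sentence G : hereditary C ->
  models G class_sentence <->
  forall env : seq (vert G), size env = N -> C (induced_on env).
Proof.
move=> hC; rewrite /models sat_iter_FAll.
split=> [sat_all env size_env | C_env e size_e].
  move: (sat_all env size_env); rewrite cats0 sat_big_or => -[t].
  rewrite mem_filter mem_enum andbT.
  move=> /asboolP[G' [env' [size_env' type_env' C_env']]].
  rewrite sat_diagram // => type_env.
  apply: hereditary_embeds hC _ C_env'; apply: tuple_type_embeds size_env size_env' _.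
  by rewrite type_env type_env'.
rewrite cats0 sat_big_or; exists (tuple_type N e); last exact/sat_diagram.
by rewrite mem_filter mem_enum andbT; apply/asboolP; exists G, e; split=> //; apply: C_env.
Qed.
End ClassSentence.

(* [C] must be nonempty: a graph without vertices satisfies the right-hand side
   vacuously.  A minimal non-member embedded in [G] is padded to an [N]-tuple. *)
Lemma class_by_induced_tuples (C : graph_class) N G :
  hereditary C -> (exists G0, C G0) ->
  (forall H, minimal_nonmember C H -> #|vert H| < N) ->
  C G <-> forall env : seq (vert G), size env = N -> C (induced_on env).
Proof.
move=> hC [G0 C_G0] small; split=> [C_G env _ | C_tuples].
  exact: hereditary_embeds hC (induced_embeds _) C_G.
apply: contrapT => /exists_minimal_nonmember[H min_H [f [f_inj f_adj]]].
have [notC_H _] := min_H; have H_lt := small H min_H.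
have [H0 | /card_gt0P[h0 _]] := posnP #|vert H|.
  by apply: notC_H; apply: hereditary_embeds hC (embeds_empty _ H0) C_G0.
pose env := map f (enum (vert H)) ++ nseq (N - #|vert H|) (f h0).
have size_env : size env = N.
  by rewrite size_cat size_map -cardT size_nseq subnKC // ltnW.
apply: notC_H; apply: hereditary_embeds hC _ (C_tuples env size_env).
by apply: embeds_induced f_inj f_adj _ => x; rewrite mem_cat map_f ?mem_enum.
Qed.

Theorem corollary3p19 (C : graph_class) :
  hereditary C -> bounded_shrubdepth C ->
  exists phi : formula, sentence phi /\ (forall G : graph, C G <-> models G phi).
Proof.
move=> hC bC; case: (pselect (exists G0, C G0)) => [nonempty | empty]; last first.
  exists FFalse; split=> // G; split=> [C_G | /(_ (sat_FTrue [::]))[]].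
  by case: empty; exists G.
have [K small] := minimal_nonmembers_bounded hC bC.
exists (class_sentence C K.+1); split; first exact: sentence_class_sentence.
move=> G; apply: iff_trans (iff_sym (models_class_sentence _ _ hC)).
by apply: class_by_induced_tuples => // H /small.
Qed.
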